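(* Let $\rho\colon\mathcal{F}\to[\Lambda]^\omega$ with $\mathcal{F}\subseteq[\Omega]^\omega$ be a partition regular function which has small accretions. Consider the conditions: (1) $\mathrm{FinBW}(\rho)$ coincides with the class of all compact metric spaces in the realm of metric spaces, i.e. a metric space belongs to $\mathrm{FinBW}(\rho)$ if and only if it is compact; (2) $[0,1]\in\mathrm{FinBW}(\rho)$; (3) $\rho_{\mathrm{conv}}\not\leq_K\rho$. Then (1) and (2) are equivalent and imply (3). If moreover $\rho\in P^-$, then (1), (2), (3) are all equivalent.
   Context: All topological spaces are Hausdorff. An ideal on a set $X$: $\mathcal{I}\subseteq\mathcal{P}(X)$ with $\emptyset\in\mathcal{I}$, $X\notin\mathcal{I}$, closed under finite unions and subsets, containing all finite sets; $\mathcal{I}^+=\mathcal{P}(X)\setminus\mathcal{I}$. Partition regular function: $\Lambda,\Omega$ countably infinite, $\mathcal{F}$ a nonempty family of infinite subsets of $\Omega$ with $F\setminus K\in\mathcal{F}$ for $F\in\mathcal{F}$, $K$ finite; $\rho\colon\mathcal{F}\to[\Lambda]^\omega$ is partition regular if (M) $E\subseteq F\Rightarrow\rho(E)\subseteq\rho(F)$; (R) if $F\in\mathcal{F}$ and $\rho(F)=A\cup B$ then some $E\in\mathcal{F}$ has $\rho(E)\subseteq A$ or $\rho(E)\subseteq B$; (S) for every $E\in\mathcal{F}$ there is $F\in\mathcal{F}$, $F\subseteq E$, such that every $a\in\rho(F)$ satisfies $a\notin\rho(F\setminus K)$ for some finite $K\subseteq\Omega$. $\mathcal{I}_\rho=\{A\subseteq\Lambda:\forall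 F\in\mathcal{F}\ \rho(F)\not\subseteq A\}$. For an ideal $\mathcal{I}$ on a countable set $\Lambda$, $\rho_{\mathcal{I}}\colon\mathcal{I}^+\to[\Lambda]^\omega$, $\rho_{\mathcal{I}}(A)=A$ (with $\Omega=\Lambda$). $\rho$ has small accretions: for every $E\in\mathcal{F}$ there is $F\in\mathcal{F}$, $F\subseteq E$, with $\rho(F)\setminus\rho(F\setminus K)\in\mathcal{I}_\rho$ for all finite $K\subseteq\Omega$. $\rho\in P^-$: for every decreasing $A_0\supseteq A_1\supseteq\dots$ of subsets of $\Lambda$ with $A_0\notin\mathcal{I}_\rho$ and $A_n\setminus A_{n+1}\in\mathcal{I}_\rho$, there is $F\in\mathcal{F}$ with $\rho(F)\subseteq A_0$ such that for each $n$ some finite $K\subseteq\Omega$ has $\rho(F\setminus K)\subseteq A_n$. $\rho$-convergence and $\mathrm{FinBW}(\rho)$: $f\restriction\rho(F)$ ($f\colon\Lambda\to X$, $F\in\mathcal{F}$) $\rho$-converges to $x$ if for every neighborhood $U$ of $x$ some finite $K\subseteq\Omega$ has $f[\rho(F\setminus K)]\subseteq U$; $\mathrm{FinBW}(\rho)$ is the class of spaces $X$ such that for every $f\colon\Lambda\to X$ some $F\in\mathcal{F}$ makes $f\restriction\rho(F)$ $\rho$-convergent to a point of $X$. Katětov order: $\rho_2\leq_K\rho_1$ if there is $f\colon\Lambda_1\to\Lambda_2$ such that for every $F_1\in\mathcal{F}_1$ there is $F_2\in\mathcal{F}_2$ such that for every finite $K_1\subseteq\Omega_1$ there is a finite $K_2\subseteq\Omega_2$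 with $\rho_2(F_2\setminus K_2)\subseteq f[\rho_1(F_1\setminus K_1)]$. $\mathrm{conv}$ is the ideal on $\mathbb{Q}\cap[0,1]$ of all sets covered by the ranges of finitely many sequences in $\mathbb{Q}\cap[0,1]$ convergent in $[0,1]$. *)

From HB Require Import structures.
From mathcomp Require Import all_boot all_order all_algebra.
From mathcomp Require Import all_classical all_reals all_analysis.
Set Implicit Arguments. Unset Strict Implicit. Unset Printing Implicit Defensive.
Import Order.TTheory GRing.Theory Num.Theory.
Import numFieldNormedType.Exports.
Local Open Scope classical_set_scope.
Local Open Scope ring_scope.

Section PRF.
Variables (Lam Om : Type).
(* A "partition regular function" is given by a family Fam of subsets of Om
   (its domain F) and a map rho (only its values on Fam matter). *)
Variables (Fam : set (set Om)) (rho : set Om -> set Lam).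

Definition partition_regular : Prop :=
  [/\ (exists F0, Fam F0),
      (forall F, Fam F -> infinite_set F),
      (forall F K, Fam F -> finite_set K -> Fam (F `\` K)) &
      (forall F, Fam F -> infinite_set (rho F))] /\
  [/\
      (forall E F, Fam E -> Fam F -> E `<=` F -> rho E `<=` rho F),
      (forall F A B, Fam F -> rho F = A `|` B ->
         exists2 E, Fam E & (rho E `<=` A \/ rho E `<=` B)) &
      (forall E, Fam E -> exists F, [/\ Fam F, F `<=` E &
         forall a, rho F a -> exists K, finite_set K /\ ~ rho (F `\` K) a])].

Definition I_rho : set (set Lam) :=
  [set A | forall F, Fam F -> ~ (rho F `<=` A)].

Definition small_accretions : Prop :=
  forall E, Fam E -> exists F, [/\ Fam F, F `<=` E &
    forall K, finite_set K -> I_rho (rho F `\` rho (F `\` K))].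

Definition P_minus : Prop :=
  forall A : nat -> set Lam,
    (forall n, A n.+1 `<=` A n) -> ~ I_rho (A 0%N) ->
    (forall n, I_rho (A n `\` A n.+1)) ->
    exists2 F, Fam F /\ rho F `<=` A 0%N &
      forall n, exists K, finite_set K /\ rho (F `\` K) `<=` A n.

Definition rho_converges (T : topologicalType) (f : Lam -> T) (F : set Om)
  (x : T) : Prop :=
  forall U, nbhs x U -> exists K, finite_set K /\ f @` rho (F `\` K) `<=` U.

Definition FinBW_on (T : topologicalType) (A : set T) : Prop :=
  forall f : Lam -> T, (forall l, A (f l)) ->
    exists F, Fam F /\ exists2 x, A x & rho_converges f F x.

Definition FinBW (T : topologicalType) : Prop := FinBW_on [set: T].
End PRF.

(* Katetov order rho2 <=_K rho1 *)
Definition katetov_le (Lam1 Om1 Lam2 Om2 : Type)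
  (Fam2 : set (set Om2)) (rho2 : set Om2 -> set Lam2)
  (Fam1 : set (set Om1)) (rho1 : set Om1 -> set Lam1) : Prop :=
  exists f : Lam1 -> Lam2, forall F1, Fam1 F1 -> exists2 F2, Fam2 F2 &
    forall K1, finite_set K1 -> exists K2, finite_set K2 /\
      rho2 (F2 `\` K2) `<=` f @` rho1 (F1 `\` K1).

(* rho_I for an ideal I on Lam: domain I^+, identity map, Om = Lam *)
Definition rho_ideal_dom (Lam : Type) (I : set (set Lam)) : set (set Lam) :=
  [set A | ~ I A].
Definition rho_ideal_map (Lam : Type) (A : set Lam) : set Lam := A.

Definition QI : Type := {q : rat | (0 <= q <= 1)%R}.

(* the ideal conv on Q cap [0,1]: sets covered by the ranges of finitely many
   sequences in Q cap [0,1] convergent in [0,1] (equivalently in R, as [0,1]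
   is closed) *)
Definition conv_ideal (R : realType) : set (set QI) :=
  [set A | exists (n : nat) (s : 'I_n -> nat -> QI),
     (forall i, exists l : R, (fun k => (ratr (sval (s i k)) : R)) @ \oo --> l)
     /\ A `<=` \bigcup_(i in [set: 'I_n]) range (s i)].

(* (1) => (2): [0, 1] is a compact metric space.  (2) => (1): in a FinBW(rho)
   space every sequence has a cluster point, which for pseudometric spaces yields
   compactness; conversely the Cantor space embeds into [0, 1] by ternary
   expansions, and a rho-convergent image pins down longer and longer prefixes of
   the digits, so the Cantor space, hence each of its continuous images, i.e.
   each compact metric space, is in FinBW(rho).
   (2) => (3): if [g] witnessed rho_conv <=_K rho, a rho-convergent restriction
   of [g] would produce a conv-positive set all but finitely many of whose
   points are close to the limit, i.e. a set in conv.
   (3) => (2) under P^-: let [f] into [0, 1] have no rho-convergent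
   restriction.  For every [F], the I_rho-cluster points of [f] on [rho F] have
   no isolated point, since P^- would otherwise build a convergent restriction.
   Rational approximations of [f] whose precision tends to 0 along rho are then
   a Katetov reduction: by small accretions, below any [F] they produce a set of
   rationals accumulating at infinitely many cluster points, which is not in
   conv. *)

From HB Require Import structures.
From mathcomp Require Import all_boot all_order all_algebra.
From mathcomp Require Import all_classical all_reals all_analysis.
From mathcomp Require Import finmap lra.
Import Order.TTheory GRing.Theory Num.Theory.
Import numFieldNormedType.Exports.
Local Open Scope classical_set_scope.
Local Open Scope ring_scope.

Set Implicit Arguments. Unset Strict Implicit. Unset Printing Implicit Defensive.

Lemma finite_nat_ub (A : set nat) : finite_set A -> exists N, A `<=` `I_N.
Proof.
move=> /finite_fsetP[X ->]; exists (\max_(x <- enum_fset X) x).+1 => n /= nX.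
by rewrite /= ltnS; apply: (@leq_bigmax_seq _ _ predT id n).
Qed.

Lemma finite_preimage_II (T : Type) (h : T -> nat) n :
  injective h -> finite_set (h @^-1` `I_n).
Proof. by move=> hinj; apply: finite_preimage (finite_II n) => a b _ _; exact: hinj. Qed.

Lemma exists_divr_nat_lt (R : realType) (r eps : R) : 0 < eps ->
  exists n, r / n.+1%:R < eps.
Proof.
move=> eps0; exists (Num.truncn (r / eps)).
by rewrite ltr_pdivrMr // mulrC -ltr_pdivrMr // truncnS_gt.
Qed.

Lemma ballRE (R : realType) (x e y : R) : ball x e y = (`|x - y| < e).
Proof. by rewrite -ball_normE. Qed.

Section ideal_of_rho.
Variables (Lam Om : Type) (Fam : set (set Om)) (rho : set Om -> set Lam).
Hypothesis Hpr : partition_regular Fam rho.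
Local Notation I := (I_rho Fam rho).

Lemma rhoS E F : Fam E -> Fam F -> E `<=` F -> rho E `<=` rho F.
Proof. by case: Hpr => _ [HM _ _]; apply: HM. Qed.

Lemma FamD F K : Fam F -> finite_set K -> Fam (F `\` K).
Proof. by case: Hpr => [[_ _ HD _] _]; apply: HD. Qed.

Lemma rho_infinite F : Fam F -> infinite_set (rho F).
Proof. by case: Hpr => [[_ _ _ inf] _]; apply: inf. Qed.

Lemma I_rhoS A B : B `<=` A -> I A -> I B.
Proof. by move=> BA IA F FF rFB; apply: (IA F FF); apply: subset_trans BA. Qed.

Lemma I_rhoU A B : I A -> I B -> I (A `|` B).
Proof.
move=> IA IB F FF rFAB; case: Hpr => _ [_ HR _].
have /HR[// | E FE [rEA | rEB]] : rho F = (rho F `&` A) `|` (rho F `&` B).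
  by rewrite -setIUr; apply/esym/setIidl.
- by apply: (IA E FE); apply: subset_trans rEA _; apply: subIsetr.
- by apply: (IB E FE); apply: subset_trans rEB _; apply: subIsetr.
Qed.

Lemma I_rho_finite A : finite_set A -> I A.
Proof. by move=> fA F FF rFA; apply: (rho_infinite FF); apply: sub_finite_set fA. Qed.

Lemma I_rhoPn A : ~ I A -> exists2 F, Fam F & rho F `<=` A.
Proof. by move=> nIA; apply: contrapT => nF; apply: nIA => F FF rFA; apply: nF; exists F. Qed.

Lemma rho_notin_I_rho F : Fam F -> ~ I (rho F).
Proof. by move=> FF /(_ F FF); apply. Qed.

Lemma notin_I_rho_neq0 A : ~ I A -> A !=set0.
Proof.
by move=> nIA; apply/set0P/negP => /eqP A0; apply: nIA; rewrite A0; exact/I_rho_finite.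
Qed.

Lemma notin_I_rhoD A B : ~ I A -> I B -> ~ I (A `\` B).
Proof.
move=> nIA IB IAB; apply: nIA; apply: (I_rhoS (A := (A `\` B) `|` B)); last exact: I_rhoU.
by move=> x Ax; case: (pselect (B x)) => ?; [right | left].
Qed.

Lemma rho_avoid_finite F (B : set Lam) : Fam F ->
    (forall a, rho F a -> exists K, finite_set K /\ ~ rho (F `\` K) a) ->
  finite_set B -> exists K, finite_set K /\ forall l, rho (F `\` K) l -> ~ B l.
Proof.
move=> FF Fthin fB.
have /choice[K KP] a : exists K, finite_set K /\ (rho F a -> ~ rho (F `\` K) a).
  have [ra | nra] := pselect (rho F a); last by exists set0; split.
  by have [K [fK nK]] := Fthin a ra; exists K.
have fKB : finite_set (\bigcup_(a in B) K a) by apply: bigcup_finite => // a _; exact: (KP a).1.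
exists (\bigcup_(a in B) K a); split => // l rl Bl.
have FKB := FamD FF fKB.
have rFl : rho F l by apply: (rhoS FKB FF _ rl) => o [].
apply: (KP l).2 rFl _.
apply: (rhoS FKB (FamD FF (KP l).1) _ rl) => o [Fo nKo].
by split => // Klo; apply: nKo; exists l.
Qed.

Definition I_rho_filter E : set_system Lam := [set A | I (rho E `\` A)].

Lemma I_rho_filter_proper E : Fam E -> ProperFilter (I_rho_filter E).
Proof.
move=> FE; split; first by rewrite /I_rho_filter /= setD0; exact: rho_notin_I_rho.
split=> [|A B|A B AB]; rewrite /I_rho_filter /=.
- by rewrite setDT; apply: I_rho_finite.
- by rewrite setDIr; exact: I_rhoU.
- by apply: I_rhoS; apply: setDS.
Qed.

Definition rho_tails F : set_system Lam :=
  filter_from [set K : set Om | finite_set K] (fun K => rho (F `\` K)).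

Lemma rho_tails_proper F : Fam F -> ProperFilter (rho_tails F).
Proof.
move=> FF; apply: filter_from_proper; last first.
  by move=> K fK; apply/infinite_setN0/rho_infinite/FamD.
apply: filter_from_filter; first by exists set0; apply: finite_set0.
move=> K1 K2 fK1 fK2; exists (K1 `|` K2); first by rewrite /= finite_setU.
have fK : finite_set (K1 `|` K2) by rewrite finite_setU.
move=> l rl; split.
- apply: (rhoS (FamD FF fK) (FamD FF fK1) _ rl) => o [Fo nK].
  by split => // ?; apply: nK; left.
- apply: (rhoS (FamD FF fK) (FamD FF fK2) _ rl) => o [Fo nK].
  by split => // ?; apply: nK; right.
Qed.

Lemma rho_convergesE (T : topologicalType) (f : Lam -> T) F x :
  rho_converges rho f F x <-> f @ rho_tails F --> x.
Proof.
split=> [cv U /cv[K [fK sub]] | cv U /cv[K fK sub]]; last first.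
  by exists K; split => // _ [l rl <-]; exact: sub.
by exists K => // l rl; apply: sub; exists l.
Qed.

End ideal_of_rho.

Section FinBW_transfer.
Variables (Lam Om : Type) (Fam : set (set Om)) (rho : set Om -> set Lam).

Lemma rho_converges_closed (T : topologicalType) (A : set T) (f : Lam -> T) F x :
  partition_regular Fam rho -> closed A -> (forall l, A (f l)) -> Fam F ->
  rho_converges rho f F x -> A x.
Proof.
move=> Hpr cA fA FF /rho_convergesE cv; have PF := rho_tails_proper Hpr FF.
apply: (@closed_cvg _ _ (rho_tails rho F) PF f A cA _ x cv).
exact: nearW.
Qed.

Lemma FinBW_on_image (T U : topologicalType) (h : T -> U) :
  continuous h -> FinBW Fam rho T -> FinBW_on Fam rho (range h).
Proof.
move=> ch bwT f fh.
have /choice[g gP] : forall l, exists t, h t = f l.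
  by move=> l; have [t _ <-] := fh l; exists t.
have [F [FF [t _ /rho_convergesE cv]]] := bwT g (fun=> I).
exists F; split => //; exists (h t); first by exists t.
have -> : f = h \o g by apply/funext => l; rewrite /= gP.
by apply/rho_convergesE; apply: cvg_comp cv (ch t).
Qed.

End FinBW_transfer.

Lemma set_type_hausdorff (X : topologicalType) (A : set X) :
  hausdorff_space X -> hausdorff_space (set_type A).
Proof.
move=> hX p q pq; apply: val_inj; apply: hX => U V pU qV.
have cval := @initial_continuous (set_type A) X set_val.
by have [z [Uz Vz]] := pq _ _ (cval p U pU) (cval q V qV); exists (set_val z).
Qed.

Lemma set_type_compact (X : topologicalType) (A : set X) :
  compact A -> compact [set: set_type A].
Proof.
move=> cA; have [[a Aa]|A0] := pselect (A !=set0); last first.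
  suff -> : [set: set_type A] = set0 by exact: compact0.
  by apply/seteqP; split => // -[x xA] _; apply: A0; exists x; exact: set_mem.
pose a0 : set_type A := exist _ a (mem_set Aa).
suff -> : [set: set_type A] = valL_ a0 id @` A.
  apply: continuous_compact cA; apply/(subspace_valL_continuousP' A a0) => z.
  exact: cvg_id.
apply/seteqP; split => // z _; exists (set_val z); first exact: set_mem (valP z).
exact: (congr1 (@^~ z) (valLK a0 id)).
Qed.

Lemma range_set_val (T : Type) (A : set T) : range (@set_val T A) = A.
Proof.
apply/seteqP; split => [_ [z _ <-] | x Ax]; first exact: set_mem (valP z).
by exists (exist _ x (mem_set Ax)).
Qed.

Lemma FinBW_itv01_of_metric (R : realType) (Lam Om : Type)
    (Fam : set (set Om)) (rho : set Om -> set Lam) :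
  (forall X : pseudoMetricType R, hausdorff_space X ->
     (FinBW Fam rho X <-> compact [set: X])) ->
  FinBW_on Fam rho (`[0, 1]%classic : set R).
Proof.
move=> metric_FinBW; pose I01 := set_type (`[0, 1]%classic : set R).
have bwI01 : FinBW Fam rho I01.
  apply/metric_FinBW; first exact/set_type_hausdorff/Rhausdorff.
  exact/set_type_compact/segment_compact.
have := FinBW_on_image (h := set_val) _ bwI01; rewrite range_set_val; apply.
exact: initial_continuous.
Qed.

Section compact_of_seq_cluster.
Variables (R : realType) (X : pseudoMetricType R).
Hypothesis seq_cluster : forall s : nat -> X, exists x : X, forall e : R, 0 < e ->
  forall N, exists2 k, (N <= k)%N & ball x e (s k).

(* Otherwise the ultrafilter contains the complement of every [r]-ball, which
   yields an [r]-separated sequence without cluster point. *)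
Lemma ultra_ball (U : set_system X) : UltraFilter U ->
  forall r : R, 0 < r -> exists c, U (ball c r).
Proof.
move=> UU r r0; apply: contrapT => /forallNP noball.
have farU (L : seq X) : U [set y | forall c, c \in L -> ~ ball c r y].
  elim: L => [|c L IH]; first exact: filterS filterT.
  have nbc : U (~` ball c r) by case: (in_ultra_setVsetC (ball c r) UU) => // /noball.
  apply: filterS (filterI nbc IH) => y [nby farL] d.
  by rewrite in_cons => /predU1P[-> | /farL].
have /choice[nxt nxtP] (L : seq X) : exists y, forall c, c \in L -> ~ ball c r y.
  exact: filter_ex (farU L).
pose LL k := iter k (fun L => nxt L :: L) [::].
have memLL j k : (j < k)%N -> nxt (LL j) \in LL k.
  elim: k => [|k IH] //; rewrite ltnS leq_eqVlt => /predU1P[-> | /IH jk].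
    by rewrite in_cons eqxx.
  by rewrite in_cons jk orbT.
have [x clx] := seq_cluster (nxt \o LL).
have r2 : 0 < r / 2 by rewrite divr_gt0.
have [j _ xj] := clx _ r2 0%N; have [k jk xk] := clx _ r2 j.+1.
apply: (nxtP (LL k) _ (memLL _ _ jk)); rewrite [r]splitr.
exact: ball_triangle (ball_sym xj) xk.
Qed.

Lemma ultra_cvg (U : set_system X) : UltraFilter U -> exists x : X, U --> x.
Proof.
move=> UU; pose rad n : R := n.+1%:R^-1.
have /choice[c cP] n : exists c, U (ball c (rad n)).
  by apply: ultra_ball; rewrite invr_gt0.
have inU n : U [set y | forall j, (j <= n)%N -> ball (c j) (rad j) y].
  elim: n => [|n IH]; first by apply: filterS (cP 0%N) => y b j; rewrite leqn0 => /eqP ->.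
  apply: filterS (filterI (cP n.+1) IH) => y [b bs] j.
  by rewrite leq_eqVlt => /predU1P[-> | /bs].
have /choice[s sP] n : exists y, forall j, (j <= n)%N -> ball (c j) (rad j) y.
  exact: filter_ex (inU n).
have [x clx] := seq_cluster s.
exists x => V /nbhs_ballP[e /= e0 eV].
have e4 : 0 < e / 4 by rewrite divr_gt0.
have [n _ hn] := near_infty_natSinv_lt (PosNum e4).
have [k nk xk] := clx _ (divr_gt0 e0 (ltr0Sn _ 1)) n.
apply: (filterS _ (cP n)) => y cny; apply: eV.
have := ball_triangle (ball_triangle xk (ball_sym (sP k n nk))) cny.
by apply: le_ball; have := hn n (leqnn n); rewrite /= -/(rad n) => ?; lra.
Qed.

Lemma compact_of_seq_cluster : compact [set: X].
Proof. by rewrite compact_ultra => U UU _; have [x Ux] := ultra_cvg UU; exists x. Qed.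

End compact_of_seq_cluster.

Lemma FinBW_seq_cluster (R : realType) (Lam Om : Type) (Fam : set (set Om))
    (rho : set Om -> set Lam) (X : pseudoMetricType R) :
  partition_regular Fam rho -> countable [set: Lam] -> FinBW Fam rho X ->
  forall s : nat -> X, exists x : X, forall e : R, 0 < e ->
    forall N, exists2 k, (N <= k)%N & ball x e (s k).
Proof.
move=> Hpr /countable_injP[en /in2TT enj] bwX s.
have [F [FF [x _ cv]]] := bwX (s \o en) (fun=> I).
exists x => e e0 N; have [K [fK sub]] := cv _ (nbhsx_ballx x e e0).
apply: contrapT => noK; apply: (rho_infinite Hpr (FamD Hpr FF fK)).
apply: (@sub_finite_set _ _ (en @^-1` `I_N)); last exact: finite_preimage_II.
move=> l rl /=; rewrite ltnNge; apply/negP => Nl; apply: noK; exists (en l) => //.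
by apply: sub; exists l.
Qed.

Lemma compact_of_FinBW (R : realType) (Lam Om : Type) (Fam : set (set Om))
    (rho : set Om -> set Lam) (X : pseudoMetricType R) :
  partition_regular Fam rho -> countable [set: Lam] ->
  FinBW Fam rho X -> compact [set: X].
Proof.
by move=> Hpr Lam_cnt bwX; apply: compact_of_seq_cluster; exact: FinBW_seq_cluster bwX.
Qed.

Section ternary_cantor_map.
Variable R : realType.
Local Notation q := (3^-1 : R).

Definition ternary_sum (c : nat -> bool) (N : nat) : R :=
  \sum_(0 <= n < N) (c n)%:R * (2 * q ^+ n.+1).

(* The point of the middle-thirds Cantor set with ternary digits [2 * c n]. *)
Definition ternary (c : nat -> bool) : R := sup (range (ternary_sum c)).

Lemma q_gt0 : 0 < q. Proof. by rewrite invr_gt0. Qed.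

Lemma sum_ternary_weights a N : (a <= N)%N ->
  \sum_(a <= n < N) 2 * q ^+ n.+1 = q ^+ a - q ^+ N.
Proof.
elim: N => [|N IH]; first by rewrite leqn0 => /eqP ->; rewrite big_geq // subrr.
rewrite leq_eqVlt => /predU1P[-> | aN]; first by rewrite big_geq // subrr.
rewrite big_nat_recr //= IH // exprS.
have : q ^+ N = 3 * (q * q ^+ N) by rewrite mulrA mulfV // mul1r.
lra.
Qed.

Lemma ternary_sum_le c M N : ternary_sum c N <= ternary_sum c M + q ^+ M.
Proof.
have w0 n : 0 <= 2 * q ^+ n.+1 by rewrite mulr_ge0 // exprn_ge0 // ltW // q_gt0.
have [NM | MN] := leqP N M.
  rewrite /ternary_sum (big_cat_nat (leq0n N) NM) /= -addrA lerDl.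
  rewrite addr_ge0 ?exprn_ge0 ?(ltW q_gt0) //.
  by apply: sumr_ge0 => n _; rewrite mulr_ge0.
rewrite /ternary_sum (big_cat_nat (leq0n M) (ltnW MN)) /= lerD2l.
apply: (le_trans (y := \sum_(M <= n < N) 2 * q ^+ n.+1)).
  by apply: ler_sum => n _; rewrite ler_piMl //; case: (c n).
by rewrite sum_ternary_weights ?(ltnW MN) // gerDl oppr_le0 exprn_ge0 // ltW // q_gt0.
Qed.

Lemma ternary_sup_ub c : has_ubound (range (ternary_sum c)).
Proof. by exists (ternary_sum c 0 + q ^+ 0) => _ [N _ <-]; apply: ternary_sum_le. Qed.

Lemma ternary_sum_le_ternary c N : ternary_sum c N <= ternary c.
Proof. by rewrite /ternary; apply: ub_le_sup; [exact: ternary_sup_ub | exists N]. Qed.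

Lemma ternary_le c M : ternary c <= ternary_sum c M + q ^+ M.
Proof.
by apply: ge_sup; [exists (ternary_sum c 0), 0%N | move=> _ [N _ <-]; apply: ternary_sum_le].
Qed.

Lemma ternary_itv c : 0 <= ternary c <= 1.
Proof.
have := ternary_sum_le_ternary c 0; have := ternary_le c 0.
by rewrite /ternary_sum big_geq // add0r expr0 => -> ->.
Qed.

Lemma ternary_gap (c d : nat -> bool) m : (forall i, (i < m)%N -> c i = d i) -> c m -> ~~ d m ->
  q ^+ m.+1 <= ternary c - ternary d.
Proof.
move=> cd cm /negbTE dm.
have := ternary_sum_le_ternary c m.+1; have := ternary_le d m.+1.
rewrite /ternary_sum !big_nat_recr //= cm dm /= mul1r mul0r addr0.
have -> : \sum_(0 <= n < m) (d n)%:R * (2 * q ^+ n.+1) =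
          \sum_(0 <= n < m) (c n)%:R * (2 * q ^+ n.+1).
  by apply: eq_big_nat => n /andP[_ nm]; rewrite cd.
lra.
Qed.

Lemma ternary_prefix (c d : nat -> bool) N : `|ternary c - ternary d| < q ^+ N.+1 ->
  forall i, (i <= N)%N -> c i = d i.
Proof.
move=> cdN; elim/ltn_ind => i IH iN; apply/eqP; apply: contraTT cdN => cdi.
have cd j : (j < i)%N -> c j = d j by move=> ji; apply: IH ji (ltnW (leq_trans ji iN)).
have qle1 : q <= 1 by rewrite invf_le1 // ler1n.
rewrite -leNgt (le_trans (ler_wiXn2l (ltW q_gt0) qle1 (iN : (i.+1 <= N.+1)%N))) //.
move: cdi; case ci : (c i); case di : (d i) => // _.
  by rewrite (le_trans (ternary_gap cd ci (negbT di))) // ler_norm.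
rewrite distrC (le_trans (ternary_gap (fun j ji => esym (cd j ji)) di (negbT ci))) //.
exact: ler_norm.
Qed.

End ternary_cantor_map.

Section cantor_space_FinBW.
Variables (Lam Om : Type) (Fam : set (set Om)) (rho : set Om -> set Lam).
Hypothesis Hpr : partition_regular Fam rho.

Lemma rho_converges_cantor (f : Lam -> cantor_space) F c : Fam F ->
  (forall i, exists K, finite_set K /\ forall l, rho (F `\` K) l -> f l i = c i) ->
  rho_converges rho f F c.
Proof.
move=> FF ev; apply/rho_convergesE; have PF := rho_tails_proper Hpr FF.
apply/pointwise_cvgP => i; apply/discrete_cvg.
by have [K [fK eqK]] := ev i; exists K => // l /eqK.
Qed.

(* Digits are read off at precision [3^-(N+1)], below which [ternary] separates prefixes. *)
Lemma FinBW_cantor (R : realType) :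
  FinBW_on Fam rho (`[0, 1]%classic : set R) -> FinBW Fam rho cantor_space.
Proof.
move=> bw01 f _.
have [F [FF [y _ cv]]] := bw01 (ternary R \o f) (fun l => ternary_itv R (f l)).
have /choice[K KP] N : exists K, finite_set K /\
    forall l, rho (F `\` K) l -> `|y - ternary R (f l)| < 3^-1 ^+ N.+1 / 2.
  have e0 : 0 < 3^-1 ^+ N.+1 / 2 :> R by rewrite divr_gt0 // exprn_gt0 // invr_gt0.
  have [K [fK sub]] := cv _ (nbhsx_ballx y _ e0).
  by exists K; split => // l rl; rewrite -ballRE; apply: sub; exists l.
have agree N l l' : rho (F `\` K N) l -> rho (F `\` K N) l' ->
    forall i, (i <= N)%N -> f l i = f l' i.
  move=> /(KP N).2 yl /(KP N).2 yl'; apply: (@ternary_prefix R).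
  have := ler_distD y (ternary R (f l)) (ternary R (f l')); rewrite distrC in yl.
  lra.
have /choice[pt ptP] N : exists l, rho (F `\` K N) l.
  exact/infinite_setN0/(rho_infinite Hpr)/(FamD Hpr FF (KP N).1).
exists F; split => //; exists (fun i => f (pt i) i) => //.
apply: rho_converges_cantor => // i; exists (K i); split; first exact: (KP i).1.
by move=> l rl; apply: agree rl (ptP i) i (leqnn i).
Qed.

End cantor_space_FinBW.

Section cantor_onto_compact.
Variables (R : realType) (X : pseudoMetricType R) (x0 : X).

(* [cantor_surj] is stated for pointed spaces: [X] is pointed at [x0] through an alias. *)
Definition pointed_at : Type := X.
HB.instance Definition _ := PseudoMetric.on pointed_at.
HB.instance Definition _ := isPointed.Build pointed_at x0.

Lemma cantor_onto_compact : compact [set: X] -> hausdorff_space X ->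
  exists2 h : cantor_space -> X, continuous h & range h = [set: X].
Proof.
move=> cX hX; have [h ch] := @cantor_surj R pointed_at cX hX.
exists h => //; apply/seteqP; split => // x _.
by have [c _ <-] := (@surj _ _ _ _ h) x I; exists c.
Qed.

End cantor_onto_compact.

Lemma FinBW_of_compact (R : realType) (Lam Om : Type) (Fam : set (set Om))
    (rho : set Om -> set Lam) (X : pseudoMetricType R) :
  partition_regular Fam rho -> FinBW_on Fam rho (`[0, 1]%classic : set R) ->
  hausdorff_space X -> compact [set: X] -> FinBW Fam rho X.
Proof.
move=> Hpr bw01 hX cX f fX.
have [F0 FF0] : exists F0, Fam F0 by case: Hpr => [[]].
have [l0 _] := infinite_setN0 (rho_infinite Hpr FF0).
have [h ch rangeh] := cantor_onto_compact (f l0) cX hX.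
have := FinBW_on_image ch (FinBW_cantor Hpr bw01); rewrite rangeh; exact.
Qed.

Definition QIval (R : realType) (q : QI) : R := ratr (sval q).
Arguments QIval {R}.

Lemma QIval_itv (R : realType) (q : QI) : 0 <= (QIval q : R) <= 1.
Proof.
case: q => q /= qI; rewrite /QIval /=; case/andP: qI => q0 q1.
by rewrite -(ler_rat R 0) -(ler_rat R q 1) rmorph0 rmorph1 in q0 q1; rewrite q0 q1.
Qed.

Lemma QI_dense (R : realType) (x d : R) : 0 <= x <= 1 -> 0 < d ->
  exists q : QI, `|QIval q - x| < d.
Proof.
move=> /andP[x0 x1] d0.
have lohi : Num.max 0 (x - d) < Num.min 1 (x + d).
  rewrite gt_max !lt_min ltr01 /=; apply/and3P; split.
  - by rewrite (le_lt_trans x0) // ltrDl.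
  - by rewrite ltrBlDr (le_lt_trans x1) // ltrDl.
  - by rewrite ltrBlDr -addrA ltrDl addr_gt0.
have [q] := rat_in_itvoo lohi; rewrite in_itv /= gt_max lt_min.
move=> /andP[/andP[q0 qd] /andP[q1 qd']].
have qI : (0 <= q <= 1)%R.
  by rewrite -(ler_rat R 0) -(ler_rat R q 1) rmorph0 rmorph1 !ltW.
by exists (exist _ q qI); rewrite /QIval /= ltr_norml; apply/andP; split; lra.
Qed.

(* The sequence enumerates [A] along [pickle] and fills the gaps with rationals tending to [x]. *)
Lemma conv_ideal_of_cofinite_balls (R : realType) (A : set QI) (x : R) :
  0 <= x <= 1 ->
  (forall e, 0 < e -> exists2 K, finite_set K & forall q, A q -> ~ K q -> `|x - QIval q| < e) ->
  conv_ideal R A.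
Proof.
move=> x01 Ax.
have /choice[ap apP] k : exists q : QI, `|QIval q - x| < k.+1%:R^-1.
  by apply: QI_dense; rewrite ?invr_gt0.
pose s k := if pickle_inv k is Some q then (if `[< A q >] then q else ap k) else ap k.
exists 1%N, (fun=> s); split=> [_ | q Aq]; last first.
  exists ord0 => //; exists (choice.pickle q) => //.
  by rewrite /s pickleK_inv; case: asboolP.
exists x; apply/cvgrPdist_lt => e e0; have [K fK Kx] := Ax e e0.
have [N1 KN1] := finite_nat_ub (finite_image choice.pickle fK).
have [N2 _ N2e] := near_infty_natSinv_lt (PosNum e0).
exists (maxn N1 N2) => // k /=; rewrite geq_max => /andP[k1 k2].
have apk : `|x - QIval (ap k)| < e by rewrite distrC (lt_trans (apP k)) //; exact: N2e.
rewrite /s; case ek: (pickle_inv k) => [q|] //; case: asboolP => // Aq.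
apply: Kx Aq _ => Kq; have pq : choice.pickle q = k by have := @pickle_invK QI k; rewrite ek.
by have := KN1 k (ex_intro2 _ _ q Kq pq); rewrite /= ltnNge k1.
Qed.

Lemma not_katetov_conv_of_FinBW_itv01 (R : realType) (Lam Om : Type) (Fam : set (set Om))
    (rho : set Om -> set Lam) :
  FinBW_on Fam rho (`[0, 1]%classic : set R) ->
  ~ katetov_le (rho_ideal_dom (conv_ideal R)) (@rho_ideal_map QI) Fam rho.
Proof.
move=> bw01 [g Kg].
have [F1 [FF1 [x x01 cv]]] := bw01 (QIval \o g) (fun l => QIval_itv R (g l)).
have [F2 nconvF2 F2K] := Kg F1 FF1; apply: nconvF2.
apply: (@conv_ideal_of_cofinite_balls R _ x x01) => e e0.
have [K1 [fK1 sub]] := cv _ (nbhsx_ballx x e e0); have [K2 [fK2 sub2]] := F2K K1 fK1.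
exists K2 => // q F2q nK2; have [l rl <-] := sub2 q (conj F2q nK2).
by rewrite -ballRE; apply: sub; exists l.
Qed.

Lemma limit_point_range_cvg (R : realType) (s : nat -> R) (l y : R) :
  s @ \oo --> l -> limit_point (range s) y -> y = l.
Proof.
move=> sl /limit_point_infinite_setP ys; apply/eqP; apply: contraPT ys => yl.
have d0 : 0 < `|y - l| / 2 by rewrite divr_gt0 // normr_gt0 subr_eq0.
move=> /(_ _ (nbhsx_ballx y _ d0)); apply.
have /cvgrPdist_lt/(_ _ d0)[N _ sN] := sl.
apply: (@sub_finite_set _ _ (s @` `I_N)); last exact/finite_image/finite_II.
move=> z [yz [k _ skz]]; exists k => //; rewrite /= ltnNge; apply/negP => Nk.
have := sN k Nk; have := ler_distD (s k) y l; rewrite -skz ballRE in yz.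
by rewrite (distrC (s k) l); lra.
Qed.

Lemma limit_point_bigcup (T : topologicalType) (I : finType) (A : I -> set T) (y : T) :
  limit_point (\bigcup_i A i) y -> exists i, limit_point (A i) y.
Proof.
move=> yA; apply: contrapT => /forallNP noi.
have /filter_forall : forall i, \forall z \near y, z != y -> ~ A i z.
  move=> i; have /existsNP[U /not_implyP[yU noU]] := noi i.
  by apply: filterS yU => z Uz zy Aiz; apply: noU; exists z.
by move=> /yA[z [zy [i _ Aiz] Uz]]; exact: Uz i zy Aiz.
Qed.

Lemma conv_ideal_limit_points (R : realType) (A : set QI) :
  conv_ideal R A -> finite_set (limit_point (QIval @` A : set R)).
Proof.
move=> [n [s [scv sA]]]; have /choice[lim limP] := scv.
apply: (@sub_finite_set _ _ (range lim)); last exact: finite_image.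
move=> y yA; have : limit_point (\bigcup_i range (QIval \o s i)) y.
  move=> U /yA[z [zy [q Aq qz] Uz]]; exists z; split => //; rewrite -qz.
  by have [i _ [k _ ski]] := sA q Aq; exists i => //; exists k; rewrite //= ski.
by move=> /limit_point_bigcup[i /(limit_point_range_cvg (limP i)) ->]; exists i.
Qed.

Section katetov_conv_of_not_FinBW.
Variables (R : realType) (Lam Om : Type) (Fam : set (set Om)) (rho : set Om -> set Lam).
Hypothesis Hpr : partition_regular Fam rho.
Local Notation I := (I_rho Fam rho).

Variable f : Lam -> R.
Hypothesis f01 : forall l, 0 <= f l <= 1.
Hypothesis f_diverges : forall F x, Fam F -> ~ rho_converges rho f F x.

Definition rho_ball E x e := rho E `&` f @^-1` ball x e.

Definition rho_cluster E x := forall e, 0 < e -> ~ I (rho_ball E x e).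

Lemma rho_clusterS E E' x : rho E' `<=` rho E -> rho_cluster E' x -> rho_cluster E x.
Proof.
by move=> E'E clx e e0; apply: contra_not (clx e e0); apply: I_rhoS => l [/E'E].
Qed.

Lemma rho_cluster_approach E x e : rho_cluster E x -> 0 < e ->
  exists l, rho E l /\ `|x - f l| < e.
Proof.
by move=> clx e0; have [l [rl]] := notin_I_rho_neq0 Hpr (clx e e0); rewrite /= ballRE; exists l.
Qed.

Lemma rho_cluster_exists E : Fam E -> exists x, rho_cluster E x.
Proof.
move=> FE; pose G := I_rho_filter Fam rho E; have PG := I_rho_filter_proper Hpr FE.
have G01 : (f @ G) `[0, 1]%classic.
  apply: (I_rhoS _ (I_rho_finite Hpr (finite_set0 _))).
  by move=> l [_ /=]; rewrite in_itv f01.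
have [x [_ clx]] := @segment_compact R 0 1 (f @ G) _ G01.
exists x => e e0 Ie; have Gnb : (f @ G) (~` ball x e).
  by apply: (I_rhoS _ Ie) => l [rl /contrapT].
by have [z [nbz bz]] := clx _ _ Gnb (nbhsx_ballx x e e0).
Qed.

Hypothesis HP : P_minus Fam rho.

(* Otherwise [P_minus], applied to the shrinking [rho_ball]s, yields a
   convergent restriction of [f]. *)
Lemma rho_ball_shell E x r : rho_cluster E x -> 0 < r ->
  exists n, ~ I (rho_ball E x (r / n.+1%:R) `\` rho_ball E x (r / n.+2%:R)).
Proof.
move=> clx r0; pose A n := rho_ball E x (r / n.+1%:R).
apply: contrapT => /forallNP small.
have Adec n : A n.+1 `<=` A n.
  move=> l [rl bl]; split => //; apply: le_ball bl.
  by rewrite ler_pM2l // lef_pV2 ?posrE // ler_nat.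
have A0 : ~ I (A 0%N) by apply: clx; rewrite divr_gt0.
have [F [FF _] FA] := HP Adec A0 (fun n => contrapT (small n)).
apply: (f_diverges (x := x) FF) => U /nbhs_ballP[eps /= eps0 epsU].
have [n rn] := exists_divr_nat_lt r eps0.
have [K [fK sub]] := FA n; exists K; split => // _ [l /sub[_ bl] <-].
by apply: epsU; apply: le_ball bl; rewrite ltW.
Qed.

Lemma rho_cluster_limit_point E x : rho_cluster E x -> limit_point (rho_cluster E) x.
Proof.
move=> clx U /nbhs_ballP[r /= r0 rU].
have [n nI] := rho_ball_shell clx (divr_gt0 r0 (ltr0n _ 2)).
have [E' FE' sE'] := I_rhoPn nI; have [y cly] := rho_cluster_exists FE'.
set a := r / 2 / n.+1%:R in sE'; set b := r / 2 / n.+2%:R in sE'.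
have b0 : 0 < b by rewrite !divr_gt0.
have ab : a <= r / 2 by rewrite /a ler_pdivrMr // ler_pMr ?divr_gt0 // ler1n.
have yxa : `|x - y| <= a.
  rewrite leNgt; apply/negP => ayx; have e0 : 0 < `|x - y| - a by rewrite subr_gt0.
  have [l [/sE'[[_ /=] + _] yl]] := rho_cluster_approach cly e0.
  by rewrite ballRE => xl; have := ler_distD (f l) x y; rewrite (distrC (f l) y); lra.
have yxb : b <= `|x - y|.
  rewrite leNgt; apply/negP => yxb; have e0 : 0 < b - `|x - y| by rewrite subr_gt0.
  have [l [/sE'[[rl _] nbl] yl]] := rho_cluster_approach cly e0; apply: nbl; split => //.
  by rewrite /= ballRE; have := ler_distD y x (f l); lra.
exists y; split.
- by rewrite eq_sym -subr_eq0 -normr_gt0 (lt_le_trans b0).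
- by apply: rho_clusterS cly => l /sE'[[]].
- by apply: rU; rewrite /= ballRE; lra.
Qed.

Lemma rho_cluster_seq F : Fam F ->
  exists y : nat -> R, injective y /\ forall i, rho_cluster F (y i).
Proof.
move=> FF; have [x clx] := rho_cluster_exists FF.
have /limit_point_infinite_setP/(_ _ filterT) := rho_cluster_limit_point clx.
rewrite setTI => /infiniteP/pcard_leP/injfunPex[y yF yinj].
by exists y; split => [i j|i]; [apply: yinj; rewrite ?in_setT | exact: yF].
Qed.

Variable e : Lam -> nat.
Hypothesis einj : injective e.

(* As [e] is injective, [1 / (e l + 1)] tends to [0] along [rho]: a positive
   set would carry a restriction of [f] converging to [c]. *)
Lemma I_rho_close_to c : I [set l | `|f l - c| < (e l).+1%:R^-1].
Proof.
apply: contrapT => /I_rhoPn[E FE sE].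
have [F [FF FE' Fthin]] : exists F, [/\ Fam F, F `<=` E &
    forall a, rho F a -> exists K, finite_set K /\ ~ rho (F `\` K) a].
  by case: Hpr => _ [_ _ HS]; exact: HS.
apply: (f_diverges (x := c) FF) => U /nbhs_ballP[eps /= eps0 epsU].
have [N Neps] := exists_divr_nat_lt 1 eps0; rewrite div1r in Neps.
have [K [fK Kfar]] := rho_avoid_finite Hpr FF Fthin (finite_preimage_II N einj).
exists K; split => // _ [l rl <-]; apply: epsU; rewrite ballRE distrC.
have Nl : (N <= e l)%N by rewrite leqNgt; apply/negP; exact: Kfar l rl.
have El : rho E l by apply: (rhoS Hpr (FamD Hpr FF fK) FE _ rl) => o [/FE'].
apply: lt_trans (sE l El) _; apply: le_lt_trans Neps.
by rewrite lef_pV2 ?posrE // ler_nat.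
Qed.

Variable g : Lam -> QI.
Hypothesis gP : forall l, `|QIval (g l) - f l| < (e l).+1%:R^-1.

Lemma I_rho_QIval_fiber (c : R) : I [set l | QIval (g l) = c].
Proof. by apply: (I_rhoS _ (I_rho_close_to (c := c))) => l /= <-; rewrite distrC gP. Qed.

Lemma rho_cluster_witness F y m K : Fam F ->
    (forall K, finite_set K -> I (rho F `\` rho (F `\` K))) ->
    rho_cluster F y -> finite_set K ->
  exists z, [/\ rho (F `\` K) z, `|y - f z| < m.+1%:R^-1, (m <= e z)%N & QIval (g z) != y].
Proof.
move=> FF acc cly fK.
have Ie : I (e @^-1` `I_m) by exact/(I_rho_finite Hpr)/finite_preimage_II.
have small := I_rhoU Hpr (acc K fK) (I_rhoU Hpr Ie (I_rho_QIval_fiber (c := y))).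
have m0 : 0 < m.+1%:R^-1 :> R by rewrite invr_gt0.
have [z [[rz bz] nz]] := notin_I_rho_neq0 Hpr (notin_I_rhoD Hpr (cly _ m0) small).
exists z; split.
- by apply: contrapT => nr; apply: nz; left.
- by rewrite -ballRE.
- by rewrite leqNgt; apply/negP => zm; apply: nz; right; left.
- by apply/eqP => yz; apply: nz; right; right.
Qed.

Hypothesis Hsa : small_accretions Fam rho.
Variable idx : Om -> nat.
Hypothesis idxinj : injective idx.

(* Below [F1], [g] takes rational values distinct from but converging to each
   of infinitely many cluster points [y i]; such a set of rationals has
   infinitely many limit points, so it is not in [conv]. *)
Lemma katetov_conv_le :
  katetov_le (rho_ideal_dom (conv_ideal R)) (@rho_ideal_map QI) Fam rho.
Proof.
exists g => F1 FF1; have [F [FF FF1F acc]] := Hsa FF1.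
have [y [yinj cly]] := rho_cluster_seq FF.
pose K n := idx @^-1` `I_n.
pose P m i z := [/\ rho (F `\` K (m + i)%N) z, `|y i - f z| < m.+1%:R^-1,
  (m <= e z)%N & QIval (g z) != y i].
have wit m i : exists z, P m i z.
  by apply: rho_cluster_witness => //; exact: finite_preimage_II.
have /choice[z zP] m : exists zm : nat -> Lam, forall i, P m i (zm i).
  by have [zm zmP] := choice (wit m); exists zm.
exists [set q | exists m i, q = g (z m i)].
  move=> /conv_ideal_limit_points finF2; apply: infinite_nat.
  rewrite -(eq_finite_set (inj_card_eq (in2W yinj))); apply: sub_finite_set finF2.
  move=> _ [i _ <-]; apply/limit_pointP; exists (fun m => QIval (g (z m i))); split.
  - by move=> _ [m _ <-]; exists (g (z m i)) => //; exists m, i.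
  - by move=> m; have [] := zP m i.
  apply/cvgrPdist_lt => eps eps0; have e2 : 0 < eps / 2 by rewrite divr_gt0.
  have [N _ Neps] := near_infty_natSinv_lt (PosNum e2).
  exists N => // m /= Nm; have [_ yz mz _] := zP m i.
  have hm : m.+1%:R^-1 < eps / 2 :> R := Neps m Nm.
  have em : (e (z m i)).+1%:R^-1 <= m.+1%:R^-1 :> R by rewrite lef_pV2 ?posrE // ler_nat.
  apply: le_lt_trans (ler_distD (f (z m i)) _ _) _.
  rewrite [eps]splitr ltrD ?(lt_trans yz hm) // distrC.
  exact: lt_trans (gP _) (le_lt_trans em hm).
move=> K1 fK1; have [N KN] := finite_nat_ub (finite_image idx fK1).
exists [set g (z mi.1 mi.2) | mi in `I_N `*` `I_N]; split.
  by apply: finite_image; apply: finite_setX; exact: finite_II.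
move=> _ [[m [i ->]] nK2]; have [mi | Nmi] := ltnP (m + i) N.
  by exfalso; apply: nK2; exists (m, i) => //; split => /=; apply: leq_ltn_trans mi;
    [exact: leq_addr | exact: leq_addl].
exists (z m i) => //; have [rz _ _ _] := zP m i.
apply: (rhoS Hpr (FamD Hpr FF (finite_preimage_II _ idxinj)) (FamD Hpr FF1 fK1) _ rz).
move=> o [Fo nKo]; split; first exact: FF1F.
by move=> K1o; apply: nKo; apply: leq_trans Nmi; apply: KN; exists o.
Qed.

End katetov_conv_of_not_FinBW.

Lemma FinBW_itv01_of_not_katetov_conv (R : realType) (Lam Om : Type)
    (Fam : set (set Om)) (rho : set Om -> set Lam) :
  partition_regular Fam rho -> small_accretions Fam rho ->
  countable [set: Lam] -> countable [set: Om] -> P_minus Fam rho ->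
  ~ katetov_le (rho_ideal_dom (conv_ideal R)) (@rho_ideal_map QI) Fam rho ->
  FinBW_on Fam rho (`[0, 1]%classic : set R).
Proof.
move=> Hpr Hsa /countable_injP[e /in2TT einj] /countable_injP[idx /in2TT idxinj] HP.
move=> nK f f01; apply: contrapT => nbw; apply: nK.
have f01' : forall l, 0 <= f l <= 1 := f01.
have f_diverges F x : Fam F -> ~ rho_converges rho f F x.
  move=> FF cv; apply: nbw; exists F; split => //; exists x => //.
  have closed01 := compact_closed (@Rhausdorff R) (@segment_compact R 0 1).
  exact: rho_converges_closed Hpr closed01 f01 FF cv.
have /choice[g gP] l : exists q : QI, `|QIval q - f l| < (e l).+1%:R^-1.
  by apply: QI_dense; [exact: f01 | rewrite invr_gt0].
by apply: (katetov_conv_le Hpr f01' f_diverges HP einj _ Hsa idxinj) => l; exact: gP.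
Qed.

Unset Implicit Arguments.

Theorem theorem6p2 (R : realType) (Lam Om : Type)
  (Lam_cnt : countable [set: Lam]) (Lam_inf : infinite_set [set: Lam])
  (Om_cnt : countable [set: Om]) (Om_inf : infinite_set [set: Om])
  (Fam : set (set Om)) (rho : set Om -> set Lam)
  (Hpr : partition_regular Fam rho) (Hsa : small_accretions Fam rho) :
  let cond1 := forall X : pseudoMetricType R, hausdorff_space X ->
                 (FinBW Fam rho X <-> compact [set: X]) in
  let cond2 := FinBW_on Fam rho (`[0, 1] : set R) in
  let cond3 := ~ katetov_le (rho_ideal_dom (conv_ideal R)) (@rho_ideal_map QI)
                            Fam rho in
  [/\ cond1 <-> cond2, cond2 -> cond3 & P_minus Fam rho -> (cond3 -> cond2)].
Proof.
move=> cond1 cond2 cond3; split.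
- split; first exact: FinBW_itv01_of_metric.
  move=> bw01 X hX; split; first exact: compact_of_FinBW Hpr Lam_cnt.
  exact: FinBW_of_compact Hpr bw01 hX.
- exact: not_katetov_conv_of_FinBW_itv01.
- exact: FinBW_itv01_of_not_katetov_conv Hpr Hsa Lam_cnt Om_cnt.
Qed.
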